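(* Let $\tau\ge1$ be an integer. A hypergraph $H=(\mathcal{V},\mathcal{E})$ is inherently $\tau$-connected if and only if for every partition $\mathscr{P}$ of $\mathcal{V}$ into nonempty disjoint sets $\mathcal{V}_1,\dots,\mathcal{V}_{|\mathscr{P}|}$, $$\sum_{e\in\mathcal{E}}\big(r(e;\mathscr{P})-1\big)\ge\tau(|\mathscr{P}|-1),$$ where $r(e;\mathscr{P})$ is the number of parts of $\mathscr{P}$ that the hyperedge $e$ intersects.
   Context: Hypergraphs may have repeated hyperedges; each hyperedge is a nonempty subset of $\mathcal{V}$. A multigraph $G=(\mathcal{V},\mathcal{E}_M)$ is induced by the hypergraph $H=(\mathcal{V},\mathcal{E})$ if its edge multiset decomposes as a disjoint union of edge sets of simple graphs $G_e=(e,E_e)$, $e\in\mathcal{E}$, where each $G_e$ is a connected simple graph on the vertex set $e$. $H$ is inherently $\tau$-connected if every multigraph induced by $H$ contains at least $\tau$ edge-disjoint spanning trees. *)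

From mathcomp Require Import all_boot.
Set Implicit Arguments. Unset Strict Implicit. Unset Printing Implicit Defensive.

(* A hypergraph on the finite vertex type V is a sequence E : seq {set V} of
   hyperedges (repetitions allowed); each hyperedge must be nonempty. *)
Definition hyperedges_nonempty (V : finType) (E : seq {set V}) : bool :=
  all (fun e => e != set0) E.

(* A multigraph on V is a sequence of edges (repetitions = parallel edges);
   each edge is a vertex set (a 2-element set for genuine edges). Edges are
   identified by their index 'I_(size M). *)

Definition madj (V : finType) (M : seq {set V}) (S : {set 'I_(size M)})
  : rel V :=
  fun x y => [exists i in S, nth set0 M i == [set x; y]].

Definition mconnected (V : finType) (M : seq {set V}) (S : {set 'I_(size M)})
  : Prop := forall x y : V, connect (madj S) x y.

(* acyclic: no edge of S lies on a cycle, i.e. removing any edge {x,y} of S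
   disconnects x from y in what remains *)
Definition macyclic (V : finType) (M : seq {set V}) (S : {set 'I_(size M)})
  : Prop :=
  forall i, i \in S -> forall x y : V, x != y -> nth set0 M i = [set x; y] ->
    ~~ connect (madj (S :\ i)) x y.

Definition spanning_tree (V : finType) (M : seq {set V}) (S : {set 'I_(size M)})
  : Prop := mconnected S /\ macyclic S.

Definition has_edge_disjoint_spanning_trees (V : finType) (M : seq {set V})
  (tau : nat) : Prop :=
  exists T : 'I_tau -> {set 'I_(size M)},
    (forall k, spanning_tree (T k)) /\
    (forall k l, k != l -> [disjoint T k & T l]).

Definition connected_simple_graph_on (V : finType) (e : {set V})
  (F : {set {set V}}) : Prop :=
  (forall f, f \in F -> #|f| = 2 /\ f \subset e) /\
  (forall x y, x \in e -> y \in e -> connect (fun u v => [set u; v] \in F) x y).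

(* The multigraph induced by choosing, for the i-th hyperedge E_i, the simple
   graph with edge set Fs_i: the disjoint union of the edge sets. *)
Definition induced_multigraph (V : finType) (Fs : seq {set {set V}})
  : seq {set V} := flatten (map (fun F : {set {set V}} => enum F) Fs).

Definition is_induced_choice (V : finType) (E : seq {set V})
  (Fs : seq {set {set V}}) : Prop :=
  size Fs = size E /\
  forall i, i < size E -> connected_simple_graph_on (nth set0 E i) (nth set0 Fs i).

Definition inherently_connected (V : finType) (E : seq {set V}) (tau : nat)
  : Prop :=
  forall Fs : seq {set {set V}}, is_induced_choice E Fs ->
    has_edge_disjoint_spanning_trees (induced_multigraph Fs) tau.

Definition rparts (V : finType) (e : {set V}) (P : {set {set V}}) : nat :=
  #|[set B in P | ~~ [disjoint B & e]]|.

From mathcomp Require Import all_boot zify.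
Set Implicit Arguments. Unset Strict Implicit. Unset Printing Implicit Defensive.

(* Any connected graph on a hyperedge e has at least r(e; P) - 1 edges crossing
   the partition P, and a star through one vertex of each block met by e has
   exactly that many. So H satisfies the partition condition iff all multigraphs
   it induces satisfy the Nash-Williams-Tutte condition: every partition P is
   crossed by at least tau (|P| - 1) edges.

   Nash-Williams-Tutte: take tau edge-disjoint forests of maximal total size and
   call an edge spare if some packing reachable from it by single-edge exchanges
   leaves it unused. Each forest spans every component of the spare edges, and
   all edges crossing the partition into these components are used; counting
   these crossing edges against tau (|P| - 1) forces each forest to be
   connected. *)

Lemma connect_invariant (T : finType) (e : rel T) (P : pred T) x y :
  P x -> (forall u v, P u -> e u v -> P v) -> connect e x y -> P y.
Proof.
move=> Px step /connectP[p pth ->]; elim: p x Px pth => [|z p IH] x Px //=.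
by case/andP=> exz pz; apply: IH (step _ _ Px exz) pz.
Qed.

Section EdgeIndexedGraph.
Variables (V I : finType) (ends : I -> {set V}).
Implicit Types (S T : {set I}) (i j : I) (a b u v x y : V).

Definition eadj S : rel V := fun x y => [exists i in S, ends i == [set x; y]].
Definition econn S : rel V := connect (eadj S).

Lemma eadj_sym S : symmetric (eadj S).
Proof. by move=> x y; rewrite /eadj setUC. Qed.

Lemma econnC S x y : econn S x y = econn S y x.
Proof. exact/sym_connect_sym/eadj_sym. Qed.

Lemma econn_refl S x : econn S x x.
Proof. exact: connect0. Qed.

Lemma econn_trans S y x z : econn S x y -> econn S y z -> econn S x z.
Proof. exact: connect_trans. Qed.

Lemma econn_edge S i x y : i \in S -> ends i = [set x; y] -> econn S x y.
Proof.
by move=> iS ei; apply: connect1; apply/existsP; exists i; rewrite iS ei /=.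
Qed.

Lemma econnS S T x y : S \subset T -> econn S x y -> econn T x y.
Proof.
move=> sST; apply: connect_sub x y => x y /existsP[i /andP[iS /eqP ei]].
exact: econn_edge (subsetP sST i iS) ei.
Qed.

Lemma econn0 x y : econn set0 x y = (x == y).
Proof.
apply/idP/eqP => [|->]; last exact: econn_refl.
by rewrite /econn => /connectP[[|z p]] //= /andP[/existsP[j]]; rewrite inE.
Qed.

Lemma econn_setU1 S i a b u v : ends i = [set a; b] ->
  let near w := econn S w a || econn S w b in
  econn (i |: S) u v = econn S u v || near u && near v.
Proof.
move=> ei near.
have nearE w : w \in [set a; b] -> near w.
  by case/set2P=> ->; rewrite /near econn_refl ?orbT.
apply/idP/idP.
- apply: (@connect_invariant _ _ (fun w => econn S u w || near u && near w)).
    by rewrite econn_refl.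
  move=> y z Hy /existsP[j /andP[]]; rewrite in_setU1 => /orP[/eqP->|jS] /eqP ej.
    rewrite (nearE z) ?andbT -?ei ?ej ?set22 ?orbT //.
    case/orP: Hy => [uy|/andP[-> _]]; last by rewrite orbT.
    have : y \in [set a; b] by rewrite -ei ej set21.
    by case/set2P=> yE; rewrite /near -yE uy ?orbT.
  have zy : econn S z y by rewrite econnC; apply: econn_edge jS ej.
  case/orP: Hy => [uy|/andP[-> ny]].
    by rewrite (econn_trans uy) // econnC.
  by rewrite /near; case/orP: ny => /(econn_trans zy) ->; rewrite ?orbT.
- have sub := econnS (subsetUr [set i] S).
  have toa w : near w -> econn (i |: S) w a.
    have ba : econn (i |: S) b a.
      by rewrite econnC; apply: econn_edge ei; rewrite setU11.
    by case/orP=> /sub // wb; apply: econn_trans wb ba.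
  case/orP=> [/sub //|/andP[/toa ua /toa va]].
  by apply: econn_trans ua _; rewrite econnC.
Qed.

Definition ecomp S x := [set y | econn S x y].
Definition ncomp S := #|[set ecomp S x | x in [set: V]]|.

Lemma ecompP S x y : reflect (ecomp S x = ecomp S y) (econn S x y).
Proof.
apply: (iffP idP) => [xy|Exy].
  apply/setP => z; rewrite !inE /econn.
  by rewrite (same_connect (sym_connect_sym (@eadj_sym S)) xy).
by have := econn_refl S y; rewrite -[econn S y y]inE -/(ecomp S y) -Exy inE.
Qed.

Lemma ncomp0 : ncomp set0 = #|V|.
Proof.
rewrite /ncomp -cardsT (eq_imset (g := set1)) => [|x].
  by rewrite card_imset //; apply: set1_inj.
by apply/setP => y; rewrite !inE econn0 eq_sym.
Qed.

Lemma ncomp_setU1_connected S i a b : ends i = [set a; b] -> econn S a b ->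
  ncomp (i |: S) = ncomp S.
Proof.
move=> ei ab; rewrite /ncomp (@eq_imset _ _ _ (ecomp S)) // => x; apply/setP => y.
rewrite !inE (econn_setU1 _ _ _ ei); case: (boolP (econn S x y)) => //= nxy.
apply/negbTE/negP => /andP[xab]; rewrite !(econnC S y) => yab; case/negP: nxy.
have ba : econn S b a by rewrite econnC.
case/orP: xab => [xa|xb]; case/orP: yab => [ay|by'].
- exact: econn_trans xa ay.
- exact: econn_trans xa (econn_trans ab by').
- exact: econn_trans xb (econn_trans ba ay).
- exact: econn_trans xb by'.
Qed.

(* The components of i |: S are those of S, with the components of the two ends
   of i merged into one. *)
Lemma ncomp_setU1_disconnected S i a b : ends i = [set a; b] -> ~~ econn S a b ->
  ncomp S = (ncomp (i |: S)).+1.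
Proof.
move=> ei nab; set C := [set ecomp S x | x in [set: V]].
pose X := ecomp S a; pose Y := ecomp S b.
pose f (K : {set V}) := if (a \in K) || (b \in K) then X :|: Y else K.
have f_ecomp x : ecomp (i |: S) x = f (ecomp S x).
  apply/setP => y; rewrite /f !inE; case: ifP => xab;
    rewrite !inE (econn_setU1 _ _ _ ei) xab /= ?orbF //.
  rewrite !(econnC S y); case: (boolP (econn S x y)) => //= xy.
  by case/orP: xab; rewrite econnC => /econn_trans/(_ xy) ->; rewrite ?orbT.
have fYX : f Y = f X by rewrite /f !inE !econn_refl !orbT.
have XC : X \in C by apply: imset_f.
have YC : Y \in C by apply: imset_f.
have XY : X != Y by apply: contra nab => /eqP/ecompP.
have ecomp_of K z : K \in C -> z \in K -> K = ecomp S z.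
  by case/imsetP=> w _ -> wz; apply/ecompP; rewrite inE in wz.
have f_inj : {in C :\ Y &, injective f}.
  have nbK K : K \in C :\ Y -> (b \in K) = false.
    by case/setD1P=> KY KC; apply: contraNF KY => /(ecomp_of _ _ KC) ->.
  have aXY : a \in X :|: Y by rewrite !inE econn_refl.
  move=> K L KC LC; rewrite /f (nbK K KC) (nbK L LC) !orbF.
  have [_ KC'] := setD1P KC; have [_ LC'] := setD1P LC.
  case: ifP => aK; case: ifP => aL E.
  - by rewrite (ecomp_of K a) // (ecomp_of L a).
  - by move: aL; rewrite -E aXY.
  - by move: aK; rewrite E aXY.
  - exact: E.
rewrite -[ncomp S]/#|C| (cardsD1 Y C) YC add1n -(card_in_imset f_inj).
rewrite /ncomp; congr _.+1; apply: eq_card => K.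
apply/imsetP/imsetP => [[L LCY ->]|[x _ ->]].
  by case/setD1P: LCY => _ /imsetP[y _ ->]; exists y; rewrite // f_ecomp.
rewrite f_ecomp; case: (ecomp S x =P Y) => [->|/eqP xY].
  by exists X; rewrite ?fYX // in_setD1 XY XC.
by exists (ecomp S x); rewrite // in_setD1 xY imset_f.
Qed.

Lemma ncomp_setU1 S i : #|ends i| = 2 -> ncomp S <= (ncomp (i |: S)).+1.
Proof.
move/eqP/cards2P=> [a [b [_ ei]]].
have [ab|nab] := boolP (econn S a b); last by rewrite (ncomp_setU1_disconnected ei nab).
by rewrite (ncomp_setU1_connected ei ab).
Qed.

Lemma ncomp_subset S T : S \subset T -> {in T :\: S, forall i, #|ends i| = 2} ->
  ncomp S <= ncomp T + #|T :\: S|.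
Proof.
move Hn: #|T :\: S| => n; elim: n S Hn => [|n IH] S Hn sST ends2.
  have -> : S = T by apply/eqP; rewrite eqEsubset sST -setD_eq0 -cards_eq0 Hn.
  by rewrite addn0.
have [i iTS] : exists i, i \in T :\: S by apply/card_gt0P; rewrite Hn.
have [iT _] := setDP iTS.
have TiS : T :\: (i |: S) = (T :\: S) :\ i by rewrite setDDl setUC.
have Hn' : #|T :\: (i |: S)| = n by move: Hn; rewrite TiS (cardsD1 i) iTS => -[].
have sST' : i |: S \subset T by rewrite subUset sub1set iT.
have ends2' : {in T :\: (i |: S), forall j, #|ends j| = 2}.
  by move=> j; rewrite TiS => /setD1P[_ /ends2].
have := IH _ Hn' sST' ends2'; have := ncomp_setU1 S (ends2 i iTS); lia.
Qed.

Definition forest S := forall i, i \in S -> forall x y, x != y ->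
  ends i = [set x; y] -> ~~ econn (S :\ i) x y.

Lemma forestS S T : S \subset T -> forest T -> forest S.
Proof.
move=> sST fT i iS x y xy ei; apply: contra (fT i (subsetP sST i iS) x y xy ei).
exact/econnS/setSD.
Qed.

Lemma forest_card S : forest S -> {in S, forall i, #|ends i| = 2} ->
  ncomp S + #|S| = #|V|.
Proof.
move Hn: #|S| => n; elim: n S Hn => [|n IH] S Hn fS ends2.
  by move/eqP: Hn; rewrite cards_eq0 => /eqP ->; rewrite ncomp0 addn0.
have [i iS] : exists i, i \in S by apply/card_gt0P; rewrite Hn.
have Hn' : #|S :\ i| = n by move: Hn; rewrite (cardsD1 i) iS => -[].
have ends2' : {in S :\ i, forall j, #|ends j| = 2} by move=> j /setD1P[_ /ends2].
have := IH _ Hn' (forestS (subD1set S i) fS) ends2'.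
move/eqP/cards2P: (ends2 i iS) => [a [b [ab ei]]].
have := ncomp_setU1_disconnected ei (fS i iS a b ab ei).
rewrite setD1K //; lia.
Qed.

Lemma forest_setU1 S i a b : forest S -> i \notin S -> ends i = [set a; b] ->
  ~~ econn S a b -> forest (i |: S).
Proof.
move=> fS iS ei nab j; rewrite in_setU1 => /orP[/eqP->|jS] x y xy ej.
  rewrite setU1K //; move: xy.
  have : x \in [set a; b] by rewrite -ei ej set21.
  have : y \in [set a; b] by rewrite -ei ej set22.
  do 2 case/set2P=> ->; rewrite ?eqxx // => _.
  by rewrite econnC.
have ij : i != j by apply: contraNneq iS => ->.
rewrite (_ : _ :\ j = i |: (S :\ j)); last first.
  by apply/setP => z; rewrite !inE; case: (z =P i) => [->|]; rewrite ?ij.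
have nxy := fS j jS x y xy ej.
have xy_S : econn S x y by apply: econn_edge jS ej.
have sub := econnS (subD1set S j).
have turn T' w z : econn T' w z -> econn T' z w by rewrite econnC.
rewrite (econn_setU1 _ _ _ ei) negb_or nxy /=; apply/negP => /andP[xab yab].
case/orP: xab => xz; case/orP: yab => yz.
- by case/negP: nxy; apply: econn_trans xz (turn _ _ _ yz).
- case/negP: nab.
  exact: econn_trans (turn _ _ _ (sub _ _ xz)) (econn_trans xy_S (sub _ _ yz)).
- case/negP: nab; rewrite econnC.
  exact: econn_trans (turn _ _ _ (sub _ _ xz)) (econn_trans xy_S (sub _ _ yz)).
- by case/negP: nxy; apply: econn_trans xz (turn _ _ _ yz).
Qed.

Definition forestb S := [forall i in S, forall x, forall y,
  (x != y) && (ends i == [set x; y]) ==> ~~ econn (S :\ i) x y].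

Lemma forestP S : reflect (forest S) (forestb S).
Proof.
apply: (iffP forall_inP) => [fS i iS x y xy ei|fS i iS].
  by have /forallP/(_ x)/forallP/(_ y) := fS i iS; rewrite xy ei eqxx => /implyP->.
by apply/forallP=> x; apply/forallP=> y; apply/implyP=> /andP[xy /eqP]; apply: fS.
Qed.

Definition bridges S a b := [set j in S | ~~ econn (S :\ j) a b].

(* Drop a non-bridge edge and recurse: in a forest, a bridge of the smaller
   edge set is still a bridge. *)
Lemma econn_bridges S a b : forest S -> {in S, forall i, #|ends i| = 2} ->
  econn S a b -> econn (bridges S a b) a b.
Proof.
move Hn: #|S| => n; elim: n S Hn => [|n IH] S Hn fS ends2 ab.
  by move: ab; move/eqP: Hn; rewrite cards_eq0 => /eqP->; rewrite econn0 => /eqP->;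
    apply: econn_refl.
have [sSB|/subsetPn[j jS]] := boolP (S \subset bridges S a b); first exact: econnS ab.
rewrite inE jS negbK => ab_j.
have Hn' : #|S :\ j| = n by move: Hn; rewrite (cardsD1 j) jS => -[].
have ends2' : {in S :\ j, forall i, #|ends i| = 2} by move=> i /setD1P[_ /ends2].
apply: econnS (IH _ Hn' (forestS (subD1set S j) fS) ends2' ab_j).
apply/subsetP => k; rewrite !inE => /andP[/andP[kj kS] nab_jk]; rewrite kS /=.
apply/negP => ab_k.
move/eqP/cards2P: (ends2 k kS) => [u [v [uv ek]]].
have Sj : S :\ j = k |: ((S :\ j) :\ k) by rewrite setD1K // !inE kj kS.
move: ab_j; rewrite Sj (econn_setU1 _ _ _ ek) (negbTE nab_jk) /= => /andP[au bu].
have sub w z : econn ((S :\ j) :\ k) w z -> econn (S :\ k) w z.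
  by apply: econnS; rewrite setDDl setUC -setDDl subD1set.
have turn T' w z : econn T' w z -> econn T' z w by rewrite econnC.
case/negP: (fS k kS u v uv ek).
case/orP: au => au; case/orP: bu => bu.
- by case/negP: nab_jk; apply: econn_trans au (turn _ _ _ bu).
- exact: econn_trans (turn _ _ _ (sub _ _ au)) (econn_trans ab_k (sub _ _ bu)).
- rewrite econnC.
  exact: econn_trans (turn _ _ _ (sub _ _ au)) (econn_trans ab_k (sub _ _ bu)).
- by case/negP: nab_jk; apply: econn_trans au (turn _ _ _ bu).
Qed.

Definition restrict S (K : {set V}) := [set i in S | ends i \subset K].

Lemma econn_restrict S (K : {set V}) a b :
  (forall i u v, i \in S -> ends i = [set u; v] -> u \in K -> v \in K) ->
  a \in K -> econn S a b -> econn (restrict S K) a b.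
Proof.
move=> closedK aK ab.
suff /andP[] : (b \in K) && econn (restrict S K) a b by [].
apply: (@connect_invariant _ _ (fun y => (y \in K) && econn (restrict S K) a y)) ab.
  by rewrite aK econn_refl.
move=> y z /andP[yK ay] /existsP[i /andP[iS /eqP ei]].
have zK := closedK i y z iS ei yK.
rewrite zK; apply: econn_trans ay (econn_edge _ ei).
by rewrite inE iS ei subUset !sub1set yK zK.
Qed.

Lemma leq_card_ncomp S (P : {set {set V}}) :
  {in P, forall B, B != set0} ->
  (forall B B' x, B \in P -> B' \in P -> x \in B -> x \in B' -> B = B') ->
  (forall B i u v, B \in P -> i \in S -> ends i = [set u; v] -> u \in B -> v \in B) ->
  #|P| <= ncomp S.
Proof.
move=> nonempty disj closedP.
have econnB B x y : B \in P -> x \in B -> econn S x y -> y \in B.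
  move=> BP xB; apply: (@connect_invariant _ _ (mem B)) => // u v uB.
  by case/existsP=> i /andP[iS /eqP ei]; apply: closedP ei uB.
have [->|[B0 B0P]] := set_0Vmem P; first by rewrite cards0.
have /set0Pn[x0 _] := nonempty B0 B0P.
pose pk (B : {set V}) := odflt x0 [pick x in B].
have pkB B : B \in P -> pk B \in B.
  move=> BP; rewrite /pk; case: pickP => //= noB.
  by case/set0Pn: (nonempty B BP) => x; rewrite noB.
have inj : {in P &, injective (fun B => ecomp S (pk B))}.
  move=> B B' BP B'P /ecompP pkBB'.
  exact: disj (econnB B _ _ BP (pkB B BP) pkBB') (pkB B' B'P).
rewrite -(card_in_imset inj); apply: subset_leq_card.
by apply/subsetP => _ /imsetP[B BP ->]; apply: imset_f.
Qed.

Lemma ncomp_leq_card S (Q : {set {set V}}) :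
  (forall x, exists2 K, K \in Q & x \in K) ->
  (forall K u v, K \in Q -> u \in K -> v \in K -> econn S u v) ->
  ncomp S <= #|Q|.
Proof.
move=> cover conn; pose hull (K : {set V}) := [set y | [exists x in K, econn S x y]].
apply: (leq_trans _ (leq_imset_card hull Q)); apply/subset_leq_card/subsetP.
move=> _ /imsetP[x _ ->]; have [K KQ xK] := cover x; apply/imsetP; exists K => //.
apply/setP => y; rewrite !inE; apply/idP/existsP => [xy|[u /andP[uK uy]]].
  by exists x; rewrite xK.
exact: econn_trans (conn K x u KQ xK uK) uy.
Qed.

Lemma ncomp_gt0 S : #|V| > 0 -> ncomp S > 0.
Proof.
by case/card_gt0P=> x _; apply/card_gt0P; exists (ecomp S x); apply: imset_f.
Qed.

Lemma ncomp_le1_econn S : ncomp S <= 1 -> forall x y, econn S x y.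
Proof. by move/card_le1_eqP=> C1 x y; apply/ecompP/C1; apply: imset_f. Qed.
End EdgeIndexedGraph.

Section Partitions.
Variables (V : finType) (P : {set {set V}}).
Hypothesis partP : partition P [set: V].

Definition inside (f : {set V}) := [exists B in P, f \subset B].

Let coverP x : x \in cover P. Proof. by rewrite (cover_partition partP). Qed.
Let trivP : trivIset P. Proof. exact: partition_trivIset partP. Qed.

Lemma rpartsE (f : {set V}) : rparts f P = #|pblock P @: f|.
Proof.
apply: eq_card => B; rewrite inE; apply/andP/imsetP => [[BP]|[x xf ->]].
  rewrite -setI_eq0 => /set0Pn[x /setIP[xB xf]].
  by exists x; rewrite ?(def_pblock trivP BP).
rewrite pblock_mem //; split=> //; rewrite -setI_eq0; apply/set0Pn.
by exists x; rewrite inE mem_pblock coverP.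
Qed.

Lemma rparts_setT : rparts [set: V] P = #|P|.
Proof.
rewrite rpartsE; apply: eq_card => B; apply/imsetP/idP => [[x _ ->]|BP].
  exact: pblock_mem.
have /set0Pn[x xB] := partition_neq0 partP BP.
by exists x; rewrite ?(def_pblock trivP BP).
Qed.

Lemma rparts_pair (f : {set V}) : #|f| = 2 -> rparts f P - 1 = ~~ inside f.
Proof.
move/eqP/cards2P=> [a [b [_ ->]]]; rewrite rpartsE imsetU1 imset_set1 cards2.
have -> : inside [set a; b] = (pblock P a == pblock P b).
  apply/existsP/eqP => [[B /andP[BP]]|Eab].
    by rewrite subUset !sub1set => /andP[aB bB]; rewrite !(def_pblock trivP BP).
  exists (pblock P a); rewrite pblock_mem //= subUset !sub1set.
  by rewrite {2}Eab !mem_pblock !coverP.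
by case: (_ == _).
Qed.
End Partitions.

Section CrossingEdges.
Variables (V I : finType) (ends : I -> {set V}) (P : {set {set V}}).
Hypothesis partP : partition P [set: V].

Definition crossing := [set i | ~~ inside P (ends i)].

Lemma sum_rparts_crossing (S : {set I}) : {in S, forall i, #|ends i| = 2} ->
  \sum_(i in S) (rparts (ends i) P - 1) = #|S :&: crossing|.
Proof.
move=> ends2; rewrite -sum1_card big_mkcond [RHS]big_mkcond /=.
apply: eq_bigr => i _; rewrite !inE.
by case: (boolP (i \in S)) => //= iS; rewrite rparts_pair ?ends2 //; case: (~~ _).
Qed.

Lemma sum_rparts_crossingT : (forall i, #|ends i| = 2) ->
  \sum_i (rparts (ends i) P - 1) = #|crossing|.
Proof.
move=> ends2; rewrite -[crossing]setTI -sum_rparts_crossing //.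
by apply: eq_bigl => i; rewrite inE.
Qed.

(* Without its crossing edges S has at least one component per block met by e,
   besides the isolated vertices outside e; putting each crossing edge back
   merges at most two components, and in the end e lies in one component. *)
Lemma crossing_lower (S : {set I}) (e : {set V}) :
  {in S, forall i, #|ends i| = 2 /\ ends i \subset e} ->
  {in e &, forall x y, econn ends S x y} ->
  rparts e P - 1 <= #|S :&: crossing|.
Proof.
move=> edgesS connS.
have trivP := partition_trivIset partP.
have coverP x : x \in cover P by rewrite (cover_partition partP).
pose out := [set [set v] | v in ~: e].
have out1 X : X \in out -> exists2 v, v \notin e & X = [set v].
  by case/imsetP=> v; rewrite inE; exists v.
have ncompS : ncomp ends S <= 1 + #|~: e|.
  apply: (@leq_trans #|e |: out|).
    apply: ncomp_leq_card => [x|K u v].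
      case: (boolP (x \in e)) => xe; first by exists e; rewrite ?setU11.
      by exists [set x]; rewrite ?set11 // setU1r // imset_f // inE.
    rewrite in_setU1 => /predU1P[->|/out1[w _ ->]]; first exact: connS.
    by rewrite !inE => /eqP-> /eqP->; apply: econn_refl.
  by rewrite cardsU1 leq_add ?leq_b1 ?leq_imset_card.
pose inner := [set pblock P x :&: e | x in e].
have inner1 X : X \in inner -> exists2 x, x \in e & X = pblock P x :&: e.
  by case/imsetP=> x; exists x.
have innerE x : x \in e -> x \in pblock P x :&: e.
  by rewrite inE mem_pblock coverP => ->.
have cardPe : #|inner :|: out| = rparts e P + #|~: e|.
  rewrite cardsU (_ : inner :&: out = set0) ?cards0 ?subn0; last first.
    apply/setP => X; rewrite !inE; apply/negP.
    case/andP=> /inner1[x xe ->] /out1[v ve Ex].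
    have : v \in pblock P x :&: e by rewrite Ex set11.
    by rewrite inE (negbTE ve) andbF.
  rewrite (card_imset _ set1_inj).
  rewrite rpartsE // (_ : inner = [set B :&: e | B in pblock P @: e]); last first.
    by rewrite -imset_comp.
  rewrite card_in_imset // => _ _ /imsetP[x xe ->] /imsetP[y ye ->] Exy.
  have : y \in pblock P x :&: e by rewrite Exy innerE.
  by case/setIP=> /(same_pblock trivP) ->.
have ncompSin : #|inner :|: out| <= ncomp ends (S :\: crossing).
  apply: leq_card_ncomp => [X|X Y z|X i u v].
  - case/setUP=> [/inner1[x xe ->]|/out1[v _ ->]]; apply/set0Pn.
      by exists x; apply: innerE.
    by exists v; rewrite set11.
  - case/setUP=> [/inner1[x _ ->]|/out1[v ve ->]];
      case/setUP=> [/inner1[y _ ->]|/out1[w we ->]].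
    + by case/setIP=> /(same_pblock trivP) <- _ /setIP[/(same_pblock trivP) <-].
    + by case/setIP=> _ ze /set1P zw; move: we; rewrite -zw ze.
    + by move=> /set1P zv /setIP[_ ze]; move: ve; rewrite -zv ze.
    + by move=> /set1P-> /set1P->.
  - case/setUP=> [/inner1[x xe ->]|/out1[w we ->]] /setDP[iS]; last first.
      move=> _ ei /set1P uw; move: we.
      by rewrite -uw (subsetP (edgesS i iS).2) // ei set21.
    rewrite inE negbK => /existsP[B /andP[BP iB]] ei.
    move: iB; rewrite ei subUset !sub1set => /andP[uB vB].
    have ve : v \in e by rewrite (subsetP (edgesS i iS).2) // ei set22.
    case/setIP=> ux _; rewrite inE ve andbT.
    by rewrite -(same_pblock trivP ux) (def_pblock trivP BP uB).
have ends2 : {in S :\: (S :\: crossing), forall i, #|ends i| = 2}.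
  by move=> i /setDP[iS _]; case: (edgesS i iS).
have := ncomp_subset (subsetDl S crossing) ends2.
rewrite setDDr setDv set0U; lia.
Qed.

Lemma tree_packing_bound k (T : 'I_k -> {set I}) : (forall i, #|ends i| = 2) ->
  (forall j x y, econn ends (T j) x y) ->
  (forall j l, j != l -> [disjoint T j & T l]) ->
  k * (#|P| - 1) <= \sum_i (rparts (ends i) P - 1).
Proof.
move=> ends2 connT disjT; rewrite sum_rparts_crossingT //.
have each j : #|P| - 1 <= #|T j :&: crossing|.
  rewrite -(rparts_setT partP); apply: crossing_lower => [i _|x y _ _].
    by rewrite ends2 subsetT.
  exact: connT.
have disjF j l : j != l -> [disjoint T j :&: crossing & T l :&: crossing].
  by move/disjT; apply: disjointW; apply: subsetIl.
apply: (@leq_trans (\sum_j #|T j :&: crossing|)).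
  by rewrite -[k in k * _]card_ord -sum_nat_const; apply: leq_sum => j _.
rewrite -[\sum_j _](eq_bigr _ (fun j _ => sum1_card _)).
rewrite -(partition_disjoint_bigcup addn (fun _ => 1) disjF) sum1_card.
by apply/subset_leq_card/bigcupsP => j _; apply: subsetIr.
Qed.
End CrossingEdges.

Section ForestPacking.
Variables (V I : finType) (ends : I -> {set V}) (k : nat).
Hypothesis ends2 : forall i, #|ends i| = 2.

Local Notation econn := (econn ends).
Local Notation forest := (forest ends).
Local Notation restrict := (restrict ends).

(* A packing of k edge-disjoint forests, coded by the forest (if any) that
   each edge is assigned to. *)
Definition assignment := {ffun I -> option 'I_k}.
Implicit Types (c d : assignment) (i e : I) (j l : 'I_k).

Definition forest_of c j := [set i | c i == Some j].
Definition packing c := [forall j, forestb ends (forest_of c j)].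
Definition nused c := #|[set i | c i != None]|.
Definition reassign c i (o : option 'I_k) : assignment :=
  [ffun x => if x == i then o else c x].

Lemma forest_of_reassign c i o j : forest_of (reassign c i o) j =
  if o == Some j then i |: forest_of c j else forest_of c j :\ i.
Proof.
apply/setP => x; case: (o =P Some j) => [->|/eqP/negbTE noj];
  by rewrite !inE ffunE; case: (x =P i) => [->|]; rewrite ?eqxx ?noj.
Qed.

Lemma nused_reassign c i o :
  nused (reassign c i o) + (c i != None) = nused c + (o != None).
Proof.
rewrite /nused (cardsD1 i [set x | c x != None]) (cardsD1 i [set x | _ x != None]).
rewrite (_ : #|_ :\ i| = #|[set x | c x != None] :\ i|) ?inE ?ffunE ?eqxx; first lia.
by apply: eq_card => x; rewrite !inE ffunE; case: (x =P i).
Qed.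

Definition max_packing c :=
  packing c && [forall d, packing d ==> (nused d <= nused c)].

Lemma ex_max_packing : {c | max_packing c}.
Proof.
have packing0 : packing [ffun=> None].
  by apply/forallP=> j; apply/forestP => i; rewrite inE ffunE.
exists [arg max_(c > [ffun=> None] | packing c) nused c].
case: arg_maxnP => // c pc maxc; rewrite /max_packing pc.
by apply/forallP => d; apply/implyP; apply: maxc.
Qed.

(* Move the used edge i out of its forest and put the unused edge e into it. *)
Definition exchange : rel assignment := fun c d => [exists e, exists i,
  [&& c e == None, c i != None, packing d & d == reassign (reassign c i None) e (c i)]].

Lemma max_packing_exchange c d : max_packing c -> exchange c d -> max_packing d.
Proof.
case/andP=> _ /forallP maxc /existsP[e /existsP[i /and4P[/eqP ce ci pd /eqP dE]]].
rewrite /max_packing pd; apply/forallP => d'; apply/implyP => /(implyP (maxc d')).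
suff -> : nused d = nused c by [].
have := nused_reassign (reassign c i None) e (c i); rewrite -dE.
have := nused_reassign c i None.
rewrite ffunE ce; case: (e =P i) => [ei|_]; first by move: ci; rewrite -ei ce.
rewrite ci /=; lia.
Qed.

Lemma disjoint_forest_of c j l : j != l -> [disjoint forest_of c j & forest_of c l].
Proof.
move=> jl; rewrite -setI_eq0; apply/eqP/setP => i; rewrite !inE.
by apply/negP=> /andP[/eqP-> /eqP[jE]]; rewrite jE eqxx in jl.
Qed.

Lemma packing_forest c : packing c -> forall j, forest (forest_of c j).
Proof. by move/forallP=> pc j; apply/forestP. Qed.
Arguments packing_forest [c] _ j.

Section Exchanges.
Variable c0 : assignment.
Hypothesis max_c0 : max_packing c0.

Definition reach c := connect exchange c0 c.

Definition spare := [set e | [exists c, reach c && (c e == None)]].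

Lemma reach_max_packing c : reach c -> max_packing c.
Proof. exact: connect_invariant max_c0 max_packing_exchange. Qed.

Section ClosedBlock.
Variable K : {set V}.
Hypothesis closedK :
  forall e u v, e \in spare -> ends e = [set u; v] -> u \in K -> v \in K.

Lemma econn_unused c j e a b : reach c -> c e = None -> ends e = [set a; b] ->
  a \in K -> econn (restrict (forest_of c j) K) a b.
Proof.
move=> rc ce ei aK; have /andP[pc /forallP maxc] := reach_max_packing rc.
set F := forest_of c j; have fF : forest F := packing_forest pc j.
have eF : e \notin F by rewrite inE ce.
have abF : econn F a b.
  apply/negPn/negP => nab.
  have pd : packing (reassign c e (Some j)).
    apply/forallP => l; apply/forestP; rewrite forest_of_reassign.
    case: (Some j =P Some l) => [[<-]|_]; first exact: forest_setU1 fF eF ei nab.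
    exact: forestS (subD1set _ _) (packing_forest pc l).
  have := nused_reassign c e (Some j); have := implyP (maxc _) pd.
  by rewrite ce /=; lia.
have bridges_spare : bridges ends F a b \subset spare.
  apply/subsetP => i; rewrite inE => /andP[iF nab].
  have ci : c i = Some j by move: iF; rewrite inE => /eqP.
  have ie : i != e by apply: contraTneq iF => ->.
  pose d := reassign (reassign c i None) e (Some j).
  have pd : packing d.
    apply/forallP => l; apply/forestP; rewrite !forest_of_reassign /=.
    case: (Some j =P Some l) => [[<-]|_]; last first.
      by apply: forestS (packing_forest pc l); rewrite setDDl subsetDl.
    apply: forest_setU1 (forestS (subD1set _ _) fF) _ ei nab.
    by rewrite in_setD1 negb_and eF orbT.
  have cd : exchange c d.
    by apply/existsP; exists e; apply/existsP; exists i; rewrite ce ci pd /d eqxx.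
  rewrite inE; apply/existsP; exists d.
  by rewrite /reach (connect_trans rc (connect1 cd)) !ffunE (negbTE ie) eqxx.
apply: econnS (econn_restrict _ aK (econn_bridges fF (fun i _ => ends2 i) abF)).
  by apply/subsetP => i; rewrite !inE => /andP[/andP[-> _] ->].
by move=> i u v /(subsetP bridges_spare); apply: closedK.
Qed.

Lemma econn_exchange c d j u v : reach c -> exchange c d ->
  econn (restrict (forest_of d j) K) u v -> econn (restrict (forest_of c j) K) u v.
Proof.
move=> rc /existsP[e /existsP[i /and4P[/eqP ce _ _ /eqP dE]]].
apply: connect_sub u v => x y /existsP[f /andP[]].
rewrite inE => /andP[fd fK] /eqP ef.
have [fc|] := boolP (f \in forest_of c j).
  by apply: econn_edge ef; rewrite inE fc fK.
move: fd; rewrite dE !inE !ffunE.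
case: (f =P e) => [fe _ _|_]; last by case: ifP => //= _ ->.
rewrite ef subUset sub1set in fK; case/andP: fK => xK _.
rewrite fe in ef; exact: (econn_unused j rc ce ef xK).
Qed.

Lemma econn_reach c d j u v : reach c -> connect exchange c d ->
  econn (restrict (forest_of d j) K) u v -> econn (restrict (forest_of c j) K) u v.
Proof.
move=> + /connectP[p]; elim: p c => [|d' p IH] c rc /=; first by move=> _ ->.
case/andP=> cd' pth dE uv.
have rd' : reach d' := connect_trans rc (connect1 cd').
exact: econn_exchange rc cd' (IH d' rd' pth dE uv).
Qed.

Lemma econn_spare_forest j x y : econn spare x y -> x \in K ->
  econn (restrict (forest_of c0 j) K) x y.
Proof.
move=> xy xK; pose R := restrict (forest_of c0 j) K.
suff /andP[] : (y \in K) && econn R x y by [].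
apply: (@connect_invariant _ _ (fun y => (y \in K) && econn R x y)) xy.
  by rewrite xK econn_refl.
move=> u v /andP[uK xu] /existsP[e /andP[es /eqP ei]].
rewrite (closedK es ei uK); apply: econn_trans xu _.
move: es; rewrite inE => /existsP[c /andP[rc /eqP ce]].
exact: econn_reach (connect0 _ _) rc (econn_unused j rc ce ei uK).
Qed.
End ClosedBlock.
Definition spare_partition := equivalence_partition (econn spare) [set: V].
Local Notation P := spare_partition.

Let econn_spare_equiv : {in [set: V] & &, equivalence_rel (econn spare)}.
Proof.
move=> x y z _ _ _; split=> [|xy]; first exact: econn_refl.
by rewrite /econn (same_connect _ xy) //; apply/sym_connect_sym/eadj_sym.
Qed.

Lemma spare_partitionP : partition P [set: V].
Proof. exact: equivalence_partitionP econn_spare_equiv. Qed.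

Lemma mem_spare_block x y : (y \in pblock P x) = econn spare x y.
Proof. exact: pblock_equivalence_partition econn_spare_equiv _ _ _ _. Qed.

Let coverP x : x \in cover P. Proof. by rewrite (cover_partition spare_partitionP). Qed.

Let closed_block x : forall e u v, e \in spare -> ends e = [set u; v] ->
  u \in pblock P x -> v \in pblock P x.
Proof.
move=> e u v es ei; rewrite !mem_spare_block => xu.
by apply: econn_trans xu (econn_edge es ei).
Qed.

Lemma crossing_used i : i \in crossing ends P -> exists l, c0 i = Some l.
Proof.
case c0i: (c0 i) => [l|]; first by exists l.
have spare_i : i \in spare.
  by rewrite inE; apply/existsP; exists c0; rewrite /reach connect0 c0i.
rewrite inE => /negP[].
move/eqP/cards2P: (ends2 i) => [a [b [_ ei]]].
apply/existsP; exists (pblock P a); rewrite pblock_mem //= ei subUset !sub1set.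
by rewrite mem_pblock coverP (closed_block spare_i ei) // mem_pblock coverP.
Qed.

Lemma forest_crossing_ncomp j :
  #|forest_of c0 j :&: crossing ends P| + ncomp ends (forest_of c0 j) <= #|P|.
Proof.
set F := forest_of c0 j; set cr := crossing ends P.
have fF : forest F := packing_forest (andP max_c0).1 j.
have ncomp_inner : ncomp ends (F :\: cr) <= #|P|.
  apply: ncomp_leq_card => [x|B u v BP uB vB].
    by exists (pblock P x); rewrite ?pblock_mem ?mem_pblock.
  have Buv : econn spare u v.
    rewrite -mem_spare_block.
    by rewrite (def_pblock (partition_trivIset spare_partitionP) BP uB).
  apply: econnS (econn_spare_forest (@closed_block u) j Buv _).
    apply/subsetP => i; rewrite !inE => /andP[-> iB]; rewrite andbT negbK.
    by apply/existsP; exists (pblock P u); rewrite pblock_mem.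
  by rewrite mem_pblock.
have := forest_card fF (fun i _ => ends2 i).
have := forest_card (forestS (subsetDl F cr) fF) (fun i _ => ends2 i).
have := cardsID cr F; lia.
Qed.
End Exchanges.
Theorem nash_williams_tutte :
  (forall P, partition P [set: V] ->
     k * (#|P| - 1) <= \sum_i (rparts (ends i) P - 1)) ->
  exists T : 'I_k -> {set I},
    (forall j, (forall x y, econn (T j) x y) /\ forest (T j)) /\
    (forall j l, j != l -> [disjoint T j & T l]).
Proof.
move=> partition_bound; have [c0 max_c0] := ex_max_packing.
exists (forest_of c0); split=> [j|]; last exact: disjoint_forest_of.
split=> [x y|]; last exact: packing_forest (andP max_c0).1 j.
set P := spare_partition c0; set F := forest_of c0; set cr := crossing ends P.
have partP : partition P [set: V] := spare_partitionP c0.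
have V0 : 0 < #|V| by apply/card_gt0P; exists x.
have P0 : 0 < #|P|.
  by apply/card_gt0P; exists (pblock P x); rewrite pblock_mem ?(cover_partition partP).
have cr_used : #|cr| <= \sum_l #|F l :&: cr|.
  have disjF l l' : l != l' -> [disjoint F l :&: cr & F l' :&: cr].
    by move/(disjoint_forest_of c0); apply: disjointW; apply: subsetIl.
  rewrite -[\sum_l _](eq_bigr _ (fun l _ => sum1_card _)).
  rewrite -(partition_disjoint_bigcup addn (fun _ => 1) disjF) sum1_card.
  apply/subset_leq_card/subsetP => i icr.
  have [l c0i] := crossing_used icr.
  by apply/bigcupP; exists l; rewrite // inE icr andbT inE c0i.
have sum_ncomp : ncomp ends (F j) + (k - 1) <= \sum_l ncomp ends (F l).
  rewrite (bigD1 j) //= leq_add2l (@leq_trans (\sum_(l < k | l != j) 1)) //.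
    by rewrite sum1_card cardC1 card_ord subn1.
  by apply: leq_sum => l _; apply: ncomp_gt0.
have sum_bound : \sum_l #|F l :&: cr| + \sum_l ncomp ends (F l) <= k * #|P|.
  rewrite -big_split /= -[k in k * _]card_ord -sum_nat_const.
  by apply: leq_sum => l _; apply: forest_crossing_ncomp.
have := partition_bound P partP.
rewrite sum_rparts_crossingT // mulnBr muln1 -/cr => cr_bound.
have k0 : 0 < k by apply: leq_ltn_trans (ltn_ord j).
have kP := leq_pmulr k P0.
(* lia does not treat the product k * #|P| as an atom *)
apply: ncomp_le1_econn; set m := k * #|P| in kP sum_bound cr_bound; clearbody m; lia.
Qed.
End ForestPacking.

Section StarGraph.
Variables (V : finType) (P : {set {set V}}) (e : {set V}) (c : V).
Hypotheses (partP : partition P [set: V]) (ce : c \in e).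

Let coverP x : x \in cover P. Proof. by rewrite (cover_partition partP). Qed.
Let trivP : trivIset P. Proof. exact: partition_trivIset partP. Qed.

Let in_pblock x : x \in pblock P x. Proof. by rewrite mem_pblock coverP. Qed.
Let pblockP x : pblock P x \in P. Proof. exact: pblock_mem. Qed.

Definition block_rep (B : {set V}) := odflt c [pick y in B :&: e].

(* Only the edges to c from the blocks other than that of c cross P. *)
Definition star_graph : {set {set V}} :=
  [set [set x; y] | x in e, y in e & (x != y) && (pblock P x == pblock P y)] :|:
  [set [set block_rep B; c] | B in pblock P @: e & block_rep B != c].

Lemma block_repP x : x \in e -> block_rep (pblock P x) \in pblock P x :&: e.
Proof.
move=> xe; rewrite /block_rep; case: pickP => [//|none].
by move: (none x); rewrite inE mem_pblock coverP xe.
Qed.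

Lemma star_graph_connected : connected_simple_graph_on e star_graph.
Proof.
have rep_e x : x \in e -> block_rep (pblock P x) \in e by move/block_repP/setIP=> [].
split=> [f /setUP[/imset2P[x y xe]|/imsetP[B]]|].
- by rewrite inE => /andP[ye /andP[xy _]] ->; rewrite cards2 xy subUset !sub1set xe ye.
- rewrite inE => /andP[/imsetP[x xe ->] rc] ->.
  by rewrite cards2 rc subUset !sub1set rep_e.
pose r u v := [set u; v] \in star_graph.
have r_sym : connect_sym r by apply: sym_connect_sym => u v; rewrite /r setUC.
have to_c x : x \in e -> connect r x c.
  move=> xe; set rx := block_rep (pblock P x).
  have /setIP[rxB rxe] := block_repP xe.
  apply: (@connect_trans _ _ rx).
    have [<-|xr] := eqVneq x rx; first exact: connect0.
    apply: connect1; apply/setUP; left; apply/imset2P; exists x rx => //.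
    by rewrite inE rxe xr (same_pblock trivP rxB) eqxx.
  have [->|rc] := eqVneq rx c; first exact: connect0.
  apply: connect1; apply/setUP; right; apply/imsetP.
  by exists (pblock P x); rewrite // inE imset_f.
by move=> x y xe ye; rewrite (connect_trans (to_c x xe)) // r_sym to_c.
Qed.

Lemma star_graph_rparts :
  \sum_(f in star_graph) (rparts f P - 1) <= rparts e P - 1.
Proof.
have [star2 _] := star_graph_connected.
rewrite (sum_rparts_crossing (ends := id) partP) => [|f /star2[]//].
have inside_pair x y B : B \in P -> x \in B -> y \in B -> inside P [set x; y].
  by move=> BP xB yB; apply/existsP; exists B; rewrite BP subUset !sub1set xB yB.
apply: (@leq_trans #|[set [set block_rep B; c] | B in pblock P @: e :\ pblock P c]|).
  apply/subset_leq_card/subsetP => f /setIP[/setUP[/imset2P[x y xe]|/imsetP[B]]].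
    rewrite !inE => /andP[_ /andP[_ /eqP Exy]] -> /negP[].
    by apply: inside_pair (pblockP x) (in_pblock x) _; rewrite Exy in_pblock.
  rewrite !inE => /andP[/imsetP[x xe ->] _] -> ncross; apply/imsetP.
  exists (pblock P x) => //; rewrite !inE imset_f // andbT.
  apply: contra ncross => /eqP Exc; have /setIP[rx _] := block_repP xe.
  by apply: inside_pair (pblockP c) _ (in_pblock c); rewrite -Exc.
rewrite rpartsE // [#|pblock P @: e|](cardsD1 (pblock P c)) imset_f // add1n subn1.
exact: leq_imset_card.
Qed.
End StarGraph.

Lemma rparts_connected_graph (V : finType) (P : {set {set V}}) (e : {set V})
    (F : {set {set V}}) :
  partition P [set: V] -> connected_simple_graph_on e F ->
  rparts e P - 1 <= \sum_(f in F) (rparts f P - 1).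
Proof.
move=> partP [F2 Fconn].
rewrite (sum_rparts_crossing (ends := id) partP) => [|f /F2[]//].
apply: crossing_lower => // x y xe ye; apply: connect_sub (Fconn x y xe ye) => u v uv.
by apply: connect1; apply/existsP; exists [set u; v]; rewrite uv /=.
Qed.

Definition hyperedge_star (V : finType) (P : {set {set V}}) (e : {set V}) :=
  if [pick c in e] is Some c then star_graph P e c else set0.

Lemma hyperedge_starP (V : finType) (P : {set {set V}}) (e : {set V}) :
  partition P [set: V] -> connected_simple_graph_on e (hyperedge_star P e) /\
  \sum_(f in hyperedge_star P e) (rparts f P - 1) <= rparts e P - 1.
Proof.
move=> partP; rewrite /hyperedge_star; case: pickP => [c ce|e0].
  by split; [apply: star_graph_connected | apply: star_graph_rparts].
by split=> [|]; [split=> [f|x]; rewrite ?inE // e0 | rewrite big_set0].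
Qed.

Lemma sum_induced_multigraph (V : finType) (Fs : seq {set {set V}})
    (g : {set V} -> nat) :
  \sum_(i < size (induced_multigraph Fs)) g (nth set0 (induced_multigraph Fs) i) =
  \sum_(F <- Fs) \sum_(f in F) g f.
Proof.
rewrite -(big_mkord xpredT (fun i => g (nth set0 _ i))) -(big_nth set0 xpredT g).
by rewrite big_flatten big_map /=; apply: eq_bigr => F _; rewrite big_enum.
Qed.

Lemma induced_multigraph_pair (V : finType) (E : seq {set V}) (Fs : seq {set {set V}}) :
  is_induced_choice E Fs ->
  forall i : 'I_(size (induced_multigraph Fs)),
    #|nth set0 (induced_multigraph Fs) i| = 2.
Proof.
move=> [sizeFs graphs] i; have := mem_nth set0 (ltn_ord i).
case/flattenP=> _ /mapP[F FFs ->]; rewrite mem_enum => fF.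
have ltF : index F Fs < size E by rewrite -sizeFs index_mem.
have [F2 _] := graphs _ ltF; rewrite nth_index // in F2.
by have [] := F2 _ fF.
Qed.

Lemma leq_sum_nth (A B : Type) (a0 : A) (b0 : B) (s : seq A) (t : seq B)
    (f : A -> nat) (g : B -> nat) :
  size s = size t -> (forall i, i < size s -> f (nth a0 s i) <= g (nth b0 t i)) ->
  \sum_(x <- s) f x <= \sum_(y <- t) g y.
Proof.
elim: s t => [|x s IH] [|y t] //=; first by rewrite !big_nil.
case=> st fg; rewrite !big_cons leq_add ?(fg 0) ?IH // => i; apply: (fg i.+1).
Qed.

Theorem theorem9 (tau : nat) (V : finType) (E : seq {set V}) :
  1 <= tau -> hyperedges_nonempty E ->
  inherently_connected E tau <->
  (forall P : {set {set V}}, partition P [set: V] ->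
     \sum_(e <- E) (rparts e P - 1) >= tau * (#|P| - 1)).
Proof.
move=> _ _; split=> [connE P partP | partition_bound Fs choiceFs].
- pose Fs := map (hyperedge_star P) E.
  have choiceFs : is_induced_choice E Fs.
    split=> [|i ltiE]; first by rewrite size_map.
    by rewrite (nth_map set0) //; case: (hyperedge_starP (nth set0 E i) partP).
  have [T [treesT disjT]] := connE Fs choiceFs.
  have := tree_packing_bound partP (induced_multigraph_pair choiceFs)
    (fun j => (treesT j).1) disjT.
  rewrite (sum_induced_multigraph _ (fun f => rparts f P - 1)) big_map.
  move/leq_trans; apply; apply: leq_sum => e _.
  by case: (hyperedge_starP e partP).
- have [sizeFs graphs] := choiceFs.
  have [|T [treesT disjT]] :=
    nash_williams_tutte (k := tau) (induced_multigraph_pair choiceFs).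
    move=> P partP; rewrite (sum_induced_multigraph _ (fun f => rparts f P - 1)).
    apply: leq_trans (partition_bound P partP) _.
    apply: (@leq_sum_nth _ _ set0 set0) => // i ltiE.
    exact: rparts_connected_graph partP (graphs i ltiE).
  by exists T; split=> // j; have [] := treesT j.
Qed.
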